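(* Let $G_1$, $G_2$ be graphs. Then $G_1$ and $G_2$ have the same spectra with respect to $A$ and with respect to $\bar A$ if and only if $G_1^*$ and $G_2^*$ have the same spectra with respect to $A$ and with respect to $\bar A$; and the same holds with $A,\bar A$ replaced by $|L|, \overline{|L|}$. Similarly, $\phi_{ADJ}^{G_1}=\phi_{ADJ}^{G_2}$ if and only if $\phi_{ADJ}^{G_1^*}=\phi_{ADJ}^{G_2^*}$.
   Context: Graphs are finite and simple. For a graph, $A$ and $D$ are its adjacency and degree matrices, $|L| = D+A$ is its signless Laplacian; $\bar A$ and $\overline{|L|}$ denote the adjacency matrix and signless Laplacian of its complement. The cone $G^*$ is the join of $G$ with a single vertex, i.e., $G$ plus a new vertex adjacent to all vertices of $G$. The generalized characteristic polynomial of $G$ is $\phi^G_{ADJ}(\lambda,x,y)=\det(\lambda I - A + xD + yJ)$, where $J$ is the all-ones matrix. *)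

From HB Require Import structures.
From mathcomp Require Import all_boot all_order all_algebra.
Set Implicit Arguments. Unset Strict Implicit. Unset Printing Implicit Defensive.
Import GRing.Theory.
Local Open Scope ring_scope.

(* A (finite simple) graph on n vertices is a relation e : rel 'I_n which is
   symmetric and irreflexive (these hypotheses appear in the theorem). *)

Definition gcompl n (e : rel 'I_n) : rel 'I_n := fun i j => (i != j) && ~~ e i j.

(* Cone G^*: vertex set 'I_n.+1, new vertex ord_max adjacent to all old vertices. *)
Definition cone n (e : rel 'I_n) : rel 'I_n.+1 := fun i j =>
  match unlift ord_max i, unlift ord_max j with
  | Some i', Some j' => e i' j'
  | None, Some _ => true
  | Some _, None => true
  | None, None => false
  end.

Definition adjmx n (e : rel 'I_n) : 'M[int]_n := \matrix_(i, j) (e i j)%:R.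
Definition degmx n (e : rel 'I_n) : 'M[int]_n :=
  \matrix_(i, j) ((i == j)%:R * (#|[set k | e i k]|)%:R).
Definition slapmx n (e : rel 'I_n) : 'M[int]_n := degmx e + adjmx e.

(* Two matrices have the same spectrum iff they have the same characteristic
   polynomial (multiset of eigenvalues with multiplicities). *)
Definition cospectral n m (M : 'M[int]_n) (N : 'M[int]_m) : Prop :=
  char_poly M = char_poly N.

(* Generalized characteristic polynomial det(lambda I - A + x D + y J), as a
   trivariate polynomial in {poly {poly {poly int}}}:
   lambda = outermost variable, x = middle, y = innermost. *)
Notation poly3 := {poly {poly {poly int}}}.
Definition varL : poly3 := 'X.
Definition varX : poly3 := ('X)%:P.
Definition varY : poly3 := (('X)%:P)%:P.
Definition gcharpoly n (e : rel 'I_n) : poly3 :=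
  \det (varL%:M - map_mx (fun a : int => a%:~R) (adjmx e)
        + varX *: map_mx (fun a : int => a%:~R) (degmx e)
        + varY *: const_mx 1).

From mathcomp Require Import all_boot all_order all_algebra.
From mathcomp Require Import ring zify.
Set Implicit Arguments. Unset Strict Implicit. Unset Printing Implicit Defensive.
Import GRing.Theory.
Local Open Scope ring_scope.

(* Write J for the all-ones matrix. The spectra of a graph and of its complement
   determine, and are determined by, the pair (char_poly M, char_poly (M - J)) for
   M = A (resp. |L|), since the complement has matrix -I - (A - J)
   (resp. (n - 2)I - (|L| - J)). The cone is the bordered matrix
   [[M + tI, 1], [1, b]], and the bordered-determinant and matrix-determinant
   lemmas give
     char_poly cone = (X - b + 1) char_poly M (X - t) - char_poly (M - J) (X - t),
     char_poly (cone - J) = (X - b + 1) char_poly (M - J) (X - t),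
   an invertible transformation of the pair. Finally
   det(lambda I - A + xD + yJ) = char_poly (N - yJ) with N = A - xD is affine in y,
   so it encodes exactly the pair for N, and the cone of N is again bordered. *)

Section BorderedDeterminant.
Variable R : idomainType.

Definition border_mx n (M : 'M[R]_n) (u v : 'I_n -> R) (d : R) : 'M[R]_n.+1 :=
  \matrix_(i, j) match unlift ord_max i, unlift ord_max j with
  | Some i', Some j' => M i' j' | Some i', None => u i'
  | None, Some j' => v j' | None, None => d end.

Section BorderEntries.
Variables (n : nat) (M : 'M[R]_n) (u v : 'I_n -> R) (d : R).

Lemma border_mx_ll i j : border_mx M u v d (lift ord_max i) (lift ord_max j) = M i j.
Proof. by rewrite !mxE !liftK. Qed.
Lemma border_mx_lm i : border_mx M u v d (lift ord_max i) ord_max = u i.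
Proof. by rewrite !mxE !liftK unlift_none. Qed.
Lemma border_mx_ml j : border_mx M u v d ord_max (lift ord_max j) = v j.
Proof. by rewrite !mxE !liftK unlift_none. Qed.
Lemma border_mx_mm : border_mx M u v d ord_max ord_max = d.
Proof. by rewrite !mxE unlift_none. Qed.

Lemma border_mxP (B : 'M[R]_n.+1) :
  (forall i j, B (lift ord_max i) (lift ord_max j) = M i j) ->
  (forall i, B (lift ord_max i) ord_max = u i) ->
  (forall j, B ord_max (lift ord_max j) = v j) ->
  B ord_max ord_max = d -> B = border_mx M u v d.
Proof.
move=> Bll Blm Bml Bmm; apply/matrixP => i j.
case: (unliftP ord_max i) => [i'|] ->; case: (unliftP ord_max j) => [j'|] ->.
- by rewrite border_mx_ll.
- by rewrite border_mx_lm.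
- by rewrite border_mx_ml.
- by rewrite border_mx_mm.
Qed.

End BorderEntries.

Definition border_mxE := (border_mx_ll, border_mx_lm, border_mx_ml, border_mx_mm).

Definition minor_max n (P : 'M[R]_n.+1) : 'M[R]_n :=
  \matrix_(i, j) P (lift ord_max i) (lift ord_max j).

Lemma sum_ord_max n (F : 'I_n.+1 -> R) :
  \sum_i F i = F ord_max + \sum_(i < n) F (lift ord_max i).
Proof. by rewrite (bigD1_ord ord_max). Qed.

Lemma cofactor_max n (P : 'M[R]_n.+1) :
  cofactor P ord_max ord_max = \det (minor_max P).
Proof.
rewrite /cofactor addnn -signr_odd odd_double expr0 mul1r; congr (\det _).
by apply/matrixP => i j; rewrite !mxE.
Qed.

Lemma det_last_col0 n (P : 'M[R]_n.+1) :
  (forall i, P (lift ord_max i) ord_max = 0) ->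
  \det P = P ord_max ord_max * \det (minor_max P).
Proof.
move=> P0; rewrite (expand_det_col _ ord_max) sum_ord_max big1 ?addr0 ?cofactor_max //.
by move=> i _; rewrite P0 mul0r.
Qed.

Lemma det_last_row0 n (P : 'M[R]_n.+1) :
  (forall j, P ord_max (lift ord_max j) = 0) ->
  \det P = P ord_max ord_max * \det (minor_max P).
Proof.
move=> P0; rewrite (expand_det_row _ ord_max) sum_ord_max big1 ?addr0 ?cofactor_max //.
by move=> j _; rewrite P0 mul0r.
Qed.

Lemma minor_max_border n (M : 'M[R]_n) u v d : minor_max (border_mx M u v d) = M.
Proof. by apply/matrixP => i j; rewrite mxE border_mxE. Qed.

Definition adj_form n (M : 'M[R]_n) (u v : 'I_n -> R) : R :=
  (\row_j v j *m \adj M *m \col_i u i) 0 0.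

Lemma det_border_mx n (M : 'M[R]_n) u v d : \det M != 0 ->
  \det (border_mx M u v d) = d * \det M - adj_form M u v.
Proof.
move=> detM_neq0; set a := \adj M; set B := border_mx M u v d.
set w := fun i => - (a *m \col_k u k) i 0.
(* right-multiplying by [[adj M, -adj M u], [0, det M]] makes [B] block triangular *)
pose C := border_mx a w (fun _ => 0) (\det M).
have detC : \det C = \det M ^+ n.
  rewrite det_last_row0 => [|j]; last by rewrite border_mxE.
  by rewrite border_mxE minor_max_border -det_mulmx mul_mx_adj det_scalar.
have Mw i : \sum_k M i k * w k = - (\det M * u i).
  have -> : \det M * u i = (M *m (a *m \col_k u k)) i 0.
    by rewrite mulmxA mul_mx_adj mul_scalar_mx !mxE.
  by rewrite mxE -sumrN; apply: eq_bigr => k _; rewrite mulrN.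
have BC_minor : minor_max (B *m C) = (\det M)%:M.
  rewrite -mul_mx_adj; apply/matrixP => i j; rewrite !mxE sum_ord_max !border_mxE.
  by rewrite mulr0 add0r; apply: eq_bigr => k _; rewrite !border_mxE.
have BC_corner : (B *m C) ord_max ord_max = d * \det M - adj_form M u v.
  rewrite mxE sum_ord_max !border_mxE; under eq_bigr do rewrite !border_mxE.
  rewrite /adj_form -mulmxA mxE -sumrN mulrC; congr (_ + _).
  by apply: eq_bigr => k _; rewrite /w !mxE mulrN.
have BC_col i : (B *m C) (lift ord_max i) ord_max = 0.
  rewrite mxE sum_ord_max !border_mxE; under eq_bigr do rewrite !border_mxE.
  by rewrite Mw mulrC addrN.
apply: (mulIf (expf_neq0 n detM_neq0)).
by rewrite -{1}detC -det_mulmx (det_last_col0 BC_col) BC_corner BC_minor det_scalar.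
Qed.

Lemma det_sub_rank1 n (K : 'M[R]_n) u v : \det K != 0 ->
  \det (K - \matrix_(i, j) (u i * v j)) = \det K - adj_form K u v.
Proof.
move=> detK_neq0.
(* right-multiplying by [E] subtracts [v j] times the last column from column [j] *)
pose E := border_mx 1%:M (fun _ => 0) (fun j => - v j) 1.
have detE : \det E = 1.
  rewrite det_last_col0 => [|i]; last by rewrite border_mxE.
  by rewrite border_mxE minor_max_border det1 mul1r.
have BE_row j : (border_mx K u v 1 *m E) ord_max (lift ord_max j) = 0.
  rewrite mxE sum_ord_max !border_mxE mul1r; under eq_bigr do rewrite !border_mxE mxE.
  rewrite (bigD1 j) //= eqxx mulr1 big1 ?addr0 ?addNr // => k /negPf ->.
  by rewrite mulr0.
have BE_corner : (border_mx K u v 1 *m E) ord_max ord_max = 1.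
  rewrite mxE sum_ord_max !border_mxE mulr1 big1 ?addr0 // => k _.
  by rewrite !border_mxE mulr0.
have BE_minor : minor_max (border_mx K u v 1 *m E) = K - \matrix_(i, j) (u i * v j).
  apply/matrixP => i j; rewrite !mxE sum_ord_max !border_mxE.
  under eq_bigr do rewrite !border_mxE mxE.
  rewrite (bigD1 j) //= eqxx mulr1 big1 ?addr0 => [|k /negPf ->]; last by rewrite mulr0.
  by rewrite mulrN addrC.
have := det_last_row0 BE_row; rewrite BE_corner BE_minor mul1r det_mulmx detE mulr1.
by rewrite det_border_mx // mul1r => <-.
Qed.

Definition adj_sum n (M : 'M[R]_n) : R := adj_form M (fun _ => 1) (fun _ => 1).

Lemma adj_form_const n (M : 'M[R]_n) x y :
  adj_form M (fun _ => x) (fun _ => y) = x * y * adj_sum M.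
Proof.
rewrite /adj_sum /adj_form.
have -> : \col_(i < n) x = x *: \col_i 1 by apply/matrixP => i j; rewrite !mxE mulr1.
have -> : \row_(i < n) y = y *: \row_i 1 by apply/matrixP => i j; rewrite !mxE mulr1.
by rewrite -scalemxAr -!scalemxAl !mxE mulrA.
Qed.

Lemma det_add_const_mx n (K : 'M[R]_n) c : \det K != 0 ->
  \det (K + const_mx c) = \det K + c * adj_sum K.
Proof.
move=> detK_neq0.
have -> : K + const_mx c = K - \matrix_(i, j) ((fun _ => - c) i * (fun _ => 1) j).
  by apply/matrixP => i j; rewrite !mxE mulr1 opprK.
by rewrite det_sub_rank1 // adj_form_const mulr1 mulNr opprK.
Qed.

End BorderedDeterminant.

Lemma comp_polyK (R : idomainType) (q r : {poly R}) :
  q \Po r = 'X -> cancel (comp_poly q) (comp_poly r).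
Proof. by move=> qrX p; rewrite -comp_polyA qrX comp_polyXr. Qed.

Section CharPoly.
Variables (R : idomainType) (n : nat).
Implicit Types (M : 'M[R]_n) (a b c d t u v : R).

Lemma char_poly_neq0 M : char_poly M != 0.
Proof. exact: monic_neq0 (char_poly_monic M). Qed.

Lemma char_poly_scalar_sub a M :
  char_poly (a%:M - M) = (-1) ^+ n * (char_poly M \Po (a%:P - 'X)).
Proof.
rewrite /char_poly.
have -> : char_poly_mx (a%:M - M) = (-1) *: map_mx (comp_poly (a%:P - 'X)) (char_poly_mx M).
  apply/matrixP => i j; rewrite !mxE.
  case: (i == j); rewrite ?mulr1n ?mulr0n !(rmorphB, rmorph0) /= ?comp_polyX ?comp_polyC;
    ring.
by rewrite detZ det_map_mx.
Qed.

Lemma char_poly_add_scalar t M :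
  char_poly (M + t%:M) = char_poly M \Po ('X - t%:P).
Proof.
rewrite /char_poly.
have -> : char_poly_mx (M + t%:M) = map_mx (comp_poly ('X - t%:P)) (char_poly_mx M).
  apply/matrixP => i j; rewrite !mxE.
  case: (i == j); rewrite ?mulr1n ?mulr0n !(rmorphB, rmorphD, rmorph0) /=
    ?comp_polyX comp_polyC; ring.
by rewrite det_map_mx.
Qed.

Lemma char_poly_sub_const_adj c M :
  char_poly (M - const_mx c) = char_poly M + c%:P * adj_sum (char_poly_mx M).
Proof.
rewrite /char_poly -det_add_const_mx ?char_poly_neq0 //; congr (\det _).
by apply/matrixP => i j; rewrite !mxE rmorphB /=; ring.
Qed.

Lemma char_poly_sub_const c M :
  char_poly (M - const_mx c) =
  char_poly M + c%:P * (char_poly (M - const_mx 1) - char_poly M).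
Proof. by rewrite !char_poly_sub_const_adj polyC1 mul1r addrAC subrr add0r. Qed.

Lemma char_poly_border M u v d :
  char_poly (border_mx M (fun _ => u) (fun _ => v) d) =
  ('X - d%:P) * char_poly M - (u * v)%:P * (char_poly (M - const_mx 1) - char_poly M).
Proof.
rewrite {1}/char_poly.
have -> : char_poly_mx (border_mx M (fun _ => u) (fun _ => v) d) =
          border_mx (char_poly_mx M) (fun _ => - u%:P) (fun _ => - v%:P) ('X - d%:P).
  apply: border_mxP => [i j|i|j|]; rewrite !mxE ?liftK ?unlift_none ?eqxx //.
  - by rewrite (inj_eq lift_inj).
  - by rewrite eq_sym (negPf (neq_lift _ _)) sub0r.
  - by rewrite (negPf (neq_lift _ _)) sub0r.
rewrite det_border_mx ?char_poly_neq0 // adj_form_const mulrNN.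
by rewrite char_poly_sub_const_adj polyC1 mul1r addrAC subrr add0r rmorphM.
Qed.

Lemma border_sub_const M u v d c :
  border_mx M (fun _ => u) (fun _ => v) d - const_mx c =
  border_mx (M - const_mx c) (fun _ => u - c) (fun _ => v - c) (d - c).
Proof. by apply: border_mxP => *; rewrite !mxE ?liftK ?unlift_none. Qed.

Lemma char_poly_cone t b M :
  char_poly (border_mx (M + t%:M) (fun _ => 1) (fun _ => 1) b) =
  ('X - (b - 1)%:P) * (char_poly M \Po ('X - t%:P))
    - (char_poly (M - const_mx 1) \Po ('X - t%:P)).
Proof.
rewrite char_poly_border mulr1 addrAC !char_poly_add_scalar.
by rewrite polyCB polyC1 mul1r; ring.
Qed.

Lemma char_poly_cone_sub_const t b M :
  char_poly (border_mx (M + t%:M) (fun _ => 1) (fun _ => 1) b - const_mx 1) =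
  ('X - (b - 1)%:P) * (char_poly (M - const_mx 1) \Po ('X - t%:P)).
Proof.
by rewrite border_sub_const char_poly_border subrr mulr0 polyC0 mul0r subr0 addrAC
  char_poly_add_scalar.
Qed.

Lemma cone_char_poly_pair_iff t b M1 M2 :
  char_poly M1 = char_poly M2 /\ char_poly (M1 - const_mx 1) = char_poly (M2 - const_mx 1)
  <->
  char_poly (border_mx (M1 + t%:M) (fun _ => 1) (fun _ => 1) b)
    = char_poly (border_mx (M2 + t%:M) (fun _ => 1) (fun _ => 1) b) /\
  char_poly (border_mx (M1 + t%:M) (fun _ => 1) (fun _ => 1) b - const_mx 1)
    = char_poly (border_mx (M2 + t%:M) (fun _ => 1) (fun _ => 1) b - const_mx 1).
Proof.
have shiftK : ('X - t%:P) \Po ('X + t%:P) = 'X.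
  by rewrite rmorphB /= comp_polyX comp_polyC addrK.
have shift_inj := can_inj (comp_polyK shiftK).
have lin_inj := mulfI (negbT (polyXsubC_eq0 (b - 1))).
rewrite !char_poly_cone !char_poly_cone_sub_const.
split=> [[-> ->] // | [eq_cone /lin_inj /shift_inj eqJ]]; split=> //.
by move: eq_cone; rewrite eqJ => /addIr /lin_inj /shift_inj.
Qed.

Lemma compl_cone_char_poly_iff a t b M1 M2 :
  char_poly M1 = char_poly M2 /\
  char_poly (a%:M - (M1 - const_mx 1)) = char_poly (a%:M - (M2 - const_mx 1))
  <->
  char_poly (border_mx (M1 + t%:M) (fun _ => 1) (fun _ => 1) b)
    = char_poly (border_mx (M2 + t%:M) (fun _ => 1) (fun _ => 1) b) /\
  char_poly (border_mx (a%:M - (M1 - const_mx 1)) (fun _ => 0) (fun _ => 0) 0)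
    = char_poly (border_mx (a%:M - (M2 - const_mx 1)) (fun _ => 0) (fun _ => 0) 0).
Proof.
have compl_inj : injective (fun p => (-1) ^+ n * (p \Po (a%:P - 'X))).
  have aXK : (a%:P - 'X) \Po (a%:P - 'X) = 'X.
    by rewrite rmorphB /= comp_polyC comp_polyX opprB addrC subrK.
  by move=> p q /(mulfI (negbT (signr_eq0 _ _))) /(can_inj (comp_polyK aXK)).
have char_poly_ccone M : char_poly (border_mx (a%:M - (M - const_mx 1))
      (fun _ => 0) (fun _ => 0) 0) =
    'X * ((-1) ^+ n * (char_poly (M - const_mx 1) \Po (a%:P - 'X))).
  by rewrite char_poly_border mulr0 polyC0 mul0r !subr0 char_poly_scalar_sub.
rewrite !char_poly_scalar_sub !char_poly_ccone.
split=> [[eqM /compl_inj eqJ] | [eq_cone /(mulfI (negbT (polyX_eq0 _))) /compl_inj eqJ]].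
  by split; [case: (cone_char_poly_pair_iff t b M1 M2).1 | rewrite eqJ].
split; last by rewrite eqJ.
apply: (proj1 ((cone_char_poly_pair_iff t b M1 M2).2 _)); split=> //.
by rewrite !char_poly_cone_sub_const eqJ.
Qed.

End CharPoly.

Lemma card_set_ord_max n (P : pred 'I_n.+1) :
  #|[set k | P k]| = (P ord_max : nat) + #|[set k : 'I_n | P (lift ord_max k)]|.
Proof.
rewrite -!sum1_card !(big_mkcond (fun k => k \in _)) /= (bigD1_ord ord_max) //=.
by rewrite inE; congr (_ + _); apply: eq_bigr => k _; rewrite !inE.
Qed.

Section Graph.
Variables (n : nat) (e : rel 'I_n).
Local Notation deg e i := #|[set k | e i k]|.

Lemma deg_cone_lift i : deg (cone e) (lift ord_max i) = (deg e i).+1.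
Proof.
rewrite card_set_ord_max /cone liftK unlift_none /=; apply: (congr1 (addn 1)).
by apply: eq_card => k; rewrite !inE liftK.
Qed.

Lemma deg_cone_max : deg (cone e) ord_max = n.
Proof.
rewrite card_set_ord_max /cone unlift_none -[RHS]card_ord -cardsT /=.
apply: (congr1 (addn 0)).
by apply: eq_card => k; rewrite !inE liftK.
Qed.

Lemma deg_compl_cone_lift i : deg (gcompl (cone e)) (lift ord_max i) = deg (gcompl e) i.
Proof.
rewrite card_set_ord_max /gcompl /cone liftK unlift_none /= andbF.
apply: (congr1 (addn 0)).
by apply: eq_card => k; rewrite !inE !liftK (inj_eq lift_inj).
Qed.

Lemma deg_compl_cone_max : deg (gcompl (cone e)) ord_max = 0%N.
Proof.
rewrite card_set_ord_max /gcompl /cone unlift_none eqxx /=.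
by rewrite (eq_card (B := set0)) ?cards0 // => k; rewrite !inE liftK andbF.
Qed.

Lemma adj_cone : adjmx (cone e) = border_mx (adjmx e) (fun _ => 1) (fun _ => 1) 0.
Proof. by apply: border_mxP => *; rewrite !mxE /cone ?liftK ?unlift_none. Qed.

Lemma adj_compl_cone :
  adjmx (gcompl (cone e)) = border_mx (adjmx (gcompl e)) (fun _ => 0) (fun _ => 0) 0.
Proof.
apply: border_mxP => *; rewrite !mxE /gcompl /cone ?liftK ?unlift_none
  ?(inj_eq lift_inj) ?andbF ?eqxx //.
Qed.

Lemma slap_cone :
  slapmx (cone e) = border_mx (slapmx e + 1%:M) (fun _ => 1) (fun _ => 1) n%:R.
Proof.
apply: border_mxP => [i j|i|j|]; rewrite !mxE ?deg_cone_lift ?deg_cone_max /cone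
  ?liftK ?unlift_none ?(inj_eq lift_inj).
- by case: eqVneq => _; rewrite ?mul1r ?mul0r ?addr0 ?add0r // -addn1 natrD addrAC.
- by rewrite eq_sym (negPf (neq_lift _ _)) mul0r add0r.
- by rewrite (negPf (neq_lift _ _)) mul0r add0r.
- by rewrite eqxx mul1r addr0.
Qed.

Lemma slap_compl_cone :
  slapmx (gcompl (cone e)) = border_mx (slapmx (gcompl e)) (fun _ => 0) (fun _ => 0) 0.
Proof.
apply: border_mxP => [i j|i|j|]; rewrite !mxE ?deg_compl_cone_lift ?deg_compl_cone_max
  /gcompl /cone ?liftK ?unlift_none ?(inj_eq lift_inj) ?andbF ?mulr0 ?addr0 ?eqxx //.
by rewrite eq_sym (negPf (neq_lift _ _)) mul0r.
Qed.

Hypothesis irr : irreflexive e.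

Lemma deg_compl i : (deg (gcompl e) i + deg e i).+1 = n.
Proof.
have -> : [set k | gcompl e i k] = ~: (i |: [set k | e i k]).
  by apply/setP => k; rewrite !inE /gcompl negb_or eq_sym.
rewrite cardsCs setCK card_ord cardsU1 inE irr /= add1n.
have := max_card (i |: [set k | e i k]); rewrite card_ord cardsU1 inE irr /=.
lia.
Qed.

Lemma adj_compl : adjmx (gcompl e) = (-1)%:M - (adjmx e - const_mx 1).
Proof.
apply/matrixP => i j; rewrite !mxE /gcompl.
case: eqVneq => [->|_]; first by rewrite irr /= mulr1n; ring.
by rewrite /= mulr0n; case: (e i j) => /=; ring.
Qed.

Lemma slap_compl : slapmx (gcompl e) = (n%:R - 2)%:M - (slapmx e - const_mx 1).
Proof.
apply/matrixP => i j; rewrite !mxE /gcompl.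
case: eqVneq => [<-|_] /=; last first.
  by rewrite !mulr0n !mul0r !add0r; case: (e i j) => /=; ring.
have n_deg : n%:R = (deg (gcompl e) i + deg e i).+1%:R :> int by rewrite deg_compl.
by rewrite irr /= n_deg /gcompl -addn1 !natrD; ring.
Qed.

End Graph.

Section SameOrder.
Variables (n : nat) (e1 e2 : rel 'I_n).
Hypotheses (irr1 : irreflexive e1) (irr2 : irreflexive e2).

Lemma adj_cone_cospectral_iff :
  (cospectral (adjmx e1) (adjmx e2) /\
   cospectral (adjmx (gcompl e1)) (adjmx (gcompl e2)))
  <->
  (cospectral (adjmx (cone e1)) (adjmx (cone e2)) /\
   cospectral (adjmx (gcompl (cone e1))) (adjmx (gcompl (cone e2)))).
Proof.
rewrite /cospectral (adj_compl_cone e1) (adj_compl_cone e2).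
rewrite (adj_compl irr1) (adj_compl irr2) (adj_cone e1) (adj_cone e2).
by have := compl_cone_char_poly_iff (-1) 0 0 (adjmx e1) (adjmx e2); rewrite raddf0 !addr0.
Qed.

Lemma slap_cone_cospectral_iff :
  (cospectral (slapmx e1) (slapmx e2) /\
   cospectral (slapmx (gcompl e1)) (slapmx (gcompl e2)))
  <->
  (cospectral (slapmx (cone e1)) (slapmx (cone e2)) /\
   cospectral (slapmx (gcompl (cone e1))) (slapmx (gcompl (cone e2)))).
Proof.
rewrite /cospectral (slap_compl_cone e1) (slap_compl_cone e2).
rewrite (slap_compl irr1) (slap_compl irr2) (slap_cone e1) (slap_cone e2).
exact: compl_cone_char_poly_iff.
Qed.

End SameOrder.

(* Over {poly {poly int}} the outer variable 'X is x and 'X%:P is y, so that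
   [gcharpoly e] is the characteristic polynomial of A - xD - yJ; [yzero]
   substitutes y := 0, and [map_mx yzero N = N] says that N does not involve y. *)
Local Notation intmx M := (map_mx (fun a : int => a%:~R) M).
Local Notation yzero := (map_poly (comp_poly (0 : {poly int}))).

Definition adjdeg_mx n (e : rel 'I_n) : 'M[{poly {poly int}}]_n :=
  intmx (adjmx e) - 'X *: intmx (degmx e).

Lemma gcharpolyE n (e : rel 'I_n) :
  gcharpoly e = char_poly (adjdeg_mx e - const_mx 'X%:P).
Proof.
rewrite /gcharpoly /char_poly; congr (\det _); apply/matrixP => i j.
rewrite !mxE /varL /varX /varY !(rmorphB, rmorphD, rmorphM, rmorph_int) /=; ring.
Qed.

Lemma adjdeg_mx_yzero n (e : rel 'I_n) : map_mx yzero (adjdeg_mx e) = adjdeg_mx e.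
Proof.
apply/matrixP => i j.
by rewrite !mxE !(rmorphB, rmorphM, rmorph_int) /= map_polyX.
Qed.

Lemma adjdeg_cone n (e : rel 'I_n) :
  adjdeg_mx (cone e) =
  border_mx (adjdeg_mx e + (- 'X)%:M) (fun _ => 1) (fun _ => 1) (- 'X * n%:R).
Proof.
apply: border_mxP => [i j|i|j|]; rewrite !mxE ?deg_cone_lift ?deg_cone_max /cone
  ?liftK ?unlift_none ?(inj_eq lift_inj).
- case: eqVneq => _; rewrite ?mulr1n ?mulr0n ?mul1r ?mul0r
    !(rmorphD, rmorph_int, rmorph_nat) /=; ring.
- by rewrite eq_sym (negPf (neq_lift _ _)) mul0r rmorph0 mulr0 subr0 rmorph_nat.
- by rewrite (negPf (neq_lift _ _)) mul0r rmorph0 mulr0 subr0 rmorph_nat.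
- by rewrite eqxx intrM !rmorph_nat mulr1n mulr0n sub0r mul1r mulNr.
Qed.

Lemma yzero_add_y_inj (p1 p2 q1 q2 : {poly {poly {poly int}}}) :
  map_poly yzero p1 = p1 -> map_poly yzero p2 = p2 ->
  p1 + ('X%:P)%:P * q1 = p2 + ('X%:P)%:P * q2 -> p1 = p2 /\ q1 = q2.
Proof.
have yzero_y : map_poly yzero ('X%:P)%:P = 0.
  have yzero_X : yzero 'X%:P = 0 by rewrite map_polyC /= comp_polyX polyC0.
  by rewrite map_polyC /= yzero_X polyC0.
move=> yzero1 yzero2 eq_y; have eq_p : p1 = p2.
  have := congr1 (map_poly yzero) eq_y.
  by rewrite 2!rmorphD 2!rmorphM /= yzero_y !mul0r !addr0 yzero1 yzero2.
split=> //; move: eq_y; rewrite eq_p => /addrI; apply: mulfI.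
by rewrite !polyC_eq0 polyX_eq0.
Qed.

Lemma char_poly_sub_y_iff n (N1 N2 : 'M[{poly {poly int}}]_n) :
  map_mx yzero N1 = N1 -> map_mx yzero N2 = N2 ->
  char_poly (N1 - const_mx 'X%:P) = char_poly (N2 - const_mx 'X%:P) <->
  char_poly N1 = char_poly N2 /\ char_poly (N1 - const_mx 1) = char_poly (N2 - const_mx 1).
Proof.
have yzero_char_poly N : map_mx yzero N = N ->
    map_poly yzero (char_poly N) = char_poly N.
  by rewrite map_char_poly => ->.
move=> yzero1 yzero2.
rewrite (char_poly_sub_const 'X%:P N1) (char_poly_sub_const 'X%:P N2).
split=> [/yzero_add_y_inj [] | [-> ->] //].
- exact: yzero_char_poly yzero1.
- exact: yzero_char_poly yzero2.
- by move=> -> /addIr ->.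
Qed.

Lemma gcharpoly_cone_iff n (e1 e2 : rel 'I_n) :
  gcharpoly e1 = gcharpoly e2 <-> gcharpoly (cone e1) = gcharpoly (cone e2).
Proof.
rewrite !gcharpolyE.
apply: (iff_trans (char_poly_sub_y_iff _ _)); try exact: adjdeg_mx_yzero.
apply: (iff_trans _ (iff_sym (char_poly_sub_y_iff _ _))); try exact: adjdeg_mx_yzero.
rewrite !adjdeg_cone; exact: cone_char_poly_pair_iff.
Qed.

Lemma cospectral_order n1 n2 (M1 : 'M[int]_n1) (M2 : 'M[int]_n2) :
  cospectral M1 M2 -> n1 = n2.
Proof.
rewrite /cospectral => /(congr1 (fun p : {poly int} => size p)) /=.
by rewrite !size_char_poly => -[].
Qed.

Lemma gcharpoly_order n1 n2 (e1 : rel 'I_n1) (e2 : rel 'I_n2) :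
  gcharpoly e1 = gcharpoly e2 -> n1 = n2.
Proof.
rewrite !gcharpolyE => /(congr1 (fun p : poly3 => size p)) /=.
by rewrite !size_char_poly => -[].
Qed.

Theorem corollary3p3 (n1 n2 : nat) (e1 : rel 'I_n1) (e2 : rel 'I_n2)
  (sym1 : symmetric e1) (irr1 : irreflexive e1)
  (sym2 : symmetric e2) (irr2 : irreflexive e2) :
  ((cospectral (adjmx e1) (adjmx e2) /\
    cospectral (adjmx (gcompl e1)) (adjmx (gcompl e2)))
   <->
   (cospectral (adjmx (cone e1)) (adjmx (cone e2)) /\
    cospectral (adjmx (gcompl (cone e1))) (adjmx (gcompl (cone e2)))))
  /\
  ((cospectral (slapmx e1) (slapmx e2) /\
    cospectral (slapmx (gcompl e1)) (slapmx (gcompl e2)))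
   <->
   (cospectral (slapmx (cone e1)) (slapmx (cone e2)) /\
    cospectral (slapmx (gcompl (cone e1))) (slapmx (gcompl (cone e2)))))
  /\
  (gcharpoly e1 = gcharpoly e2 <-> gcharpoly (cone e1) = gcharpoly (cone e2)).
Proof.
case: (eqVneq n1 n2) => [eq_n | /eqP neq_n].
  subst n2; split; first exact: adj_cone_cospectral_iff.
  split; first exact: slap_cone_cospectral_iff.
  exact: gcharpoly_cone_iff.
have neq_cone : n1.+1 <> n2.+1 by case.
split; first by split=> [[/cospectral_order/neq_n] | [/cospectral_order/neq_cone]].
split; first by split=> [[/cospectral_order/neq_n] | [/cospectral_order/neq_cone]].
by split=> [/gcharpoly_order/neq_n | /gcharpoly_order/neq_cone].
Qed.
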